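(* Let $K$ be a field of characteristic zero. For each integer $n\ge1$ let $T_n\in\mathbb{Z}[x]$ be the polynomial of degree $n$ such that $\mathrm{trace}(\sigma^{(n)}(s))=T_n(\mathrm{trace}(s))$ for all $s\in SL_2(K)$, where $\sigma^{(n)}$ is the $n$-th symmetric power of the standard representation of $SL_2(K)$. Let $n_1,\dots,n_r$ and $m_1,\dots,m_t$ be positive integers. Suppose there exists an infinite subset $\Sigma\subset SL_2(K)$ whose elements have pairwise distinct traces such that $$\prod_{i=1}^{r}T_{n_i}(\mathrm{trace}(s))=\prod_{j=1}^{t}T_{m_j}(\mathrm{trace}(s))\quad\text{for every } s\in\Sigma.$$ Then $r=t$ and, after reordering, $n_i=m_i$ for all $i$. *)

From HB Require Import structures.
From mathcomp Require Import all_boot all_order all_algebra.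
From mathcomp Require Import boolp classical_sets cardinality.
Set Implicit Arguments. Unset Strict Implicit. Unset Printing Implicit Defensive.
Import Order.TTheory GRing.Theory Num.Theory.
Local Open Scope ring_scope.

(* The n-th symmetric power sigma^(n) of the standard representation of GL_2(K),
   as an (n+1)x(n+1) matrix in the monomial basis x^(n-k) y^k (k = 0..n) of
   Sym^n(K^2), where g = [[a,b],[c,d]] acts by x |-> a x + c y, y |-> b x + d y
   (i.e. g e1 = a e1 + c e2, g e2 = b e1 + d e2).  Column k is the image of
   x^(n-k) y^k = (a x + c y)^(n-k) (b x + d y)^k; entry (j,k) is the
   coefficient of x^(n-j) y^j in it, i.e.
   sum_i C(n-k,i) C(k,j-i) a^(n-k-i) c^i b^(k-(j-i)) d^(j-i). *)
Definition sympow (K : fieldType) (n : nat) (g : 'M[K]_2) : 'M[K]_(n.+1) :=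
  let a := g 0 0 in let b := g 0 1 in let c := g 1 0 in let d := g 1 1 in
  \matrix_(j < n.+1, k < n.+1)
    \sum_(i < j.+1)
      (('C(n - k, i) * 'C(k, j - i))%:R
        * a ^+ (n - k - i) * c ^+ i * b ^+ (k - (j - i)) * d ^+ (j - i)).

From HB Require Import structures.
From mathcomp Require Import all_boot all_order all_algebra.
From mathcomp Require Import boolp classical_sets cardinality.
From mathcomp Require Import ring.
Import Order.TTheory GRing.Theory Num.Theory.
Local Open Scope ring_scope.

(* For s = diag(l, l^-1) the trace of sigma^(n)(s) is l^n + l^(n-2) + ... + l^-n,
   so (1 - l^2) l^n T_n(l + l^-1) = 1 - l^(2n+2).  As the traces of Sigma are
   infinitely many, the two products of the T_n agree as polynomials; evaluating
   them at l + l^-1 and clearing the factors 1 - l^2 and the powers of l gives,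
   for infinitely many l, hence in K[X], an identity
     X^a (1 - X^2)^t prod_i (1 - X^(2 n_i + 2))
       = X^b (1 - X^2)^r prod_j (1 - X^(2 m_j + 2)).
   In characteristic zero a product of factors 1 - X^e (e >= 1) determines the
   multiset of exponents: if e is the smallest one, the coefficient of X^e is
   minus its multiplicity, and that factor can be cancelled. *)

Lemma pchar0_eqr_nat {R : idomainType} :
  [pchar R] =i pred0 -> forall m n : nat, (m%:R == n%:R :> R) = (m == n).
Proof.
move=> /pcharf0P R0 m n; wlog le_mn : m n / (m <= n)%N => [W|].
  by have [/W //|/ltnW/W] := leqP m n; rewrite eq_sym [n == m]eq_sym.
rewrite -(subnKC le_mn); move: (n - m)%N => d.
by rewrite eq_sym -subr_eq0 natrD addrAC subrr add0r R0 -{1}[m]addn0 eqn_add2l eq_sym.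
Qed.

Lemma eq_poly_on_infinite (R : idomainType) (T : choiceType) (S : set T)
    (f : T -> R) (p q : {poly R}) :
  infinite_set S -> (forall x y, S x -> S y -> f x = f y -> x = y) ->
  (forall x, S x -> p.[f x] = q.[f x]) -> p = q.
Proof.
move=> S_inf f_inj pq; apply/eqP; rewrite -subr_eq0; apply/eqP.
have [B BS szB] := infinite_set_fset (size (p - q)) S_inf.
apply: (@roots_geq_poly_eq0 _ _ [seq f x | x <- finmap.enum_fset B]).
- by apply/allP => _ /mapP[x xB ->]; rewrite /root !hornerE pq ?subrr //; apply: BS.
- by rewrite map_inj_in_uniq ?finmap.fset_uniq // => x y xB yB; apply: f_inj; apply: BS.
- by rewrite size_map.
Qed.

Lemma mulXnI (R : idomainType) a b (p q : {poly R}) :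
  p.[0] != 0 -> q.[0] != 0 -> 'X^a * p = 'X^b * q -> p = q.
Proof.
wlog le_ab : a b p q / (a <= b)%N => [W|].
  have [le_ab|/ltnW le_ba] := leqP a b; first exact: W.
  by move=> p0 q0 E; apply/esym/(W _ _ _ _ le_ba q0 p0).
move=> p0 q0; rewrite -(subnKC le_ab) exprD -mulrA.
move=> /(mulfI (monic_neq0 (monicXn R a))) pE; move: p0; rewrite pE.
by case: (b - a)%N => [|c]; rewrite ?mul1r // hornerM hornerXn expr0n mul0r eqxx.
Qed.

Lemma horner_prod_1subXn (R : comNzRingType) (A : seq nat) (x : R) :
  (\prod_(a <- A) (1 - 'X^a)).[x] = \prod_(a <- A) (1 - x ^+ a).
Proof. by rewrite horner_prod; apply: eq_bigr => a _; rewrite !hornerE. Qed.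

Lemma horner0_prod_1subXn (R : comNzRingType) (A : seq nat) :
  all (leq 1) A -> (\prod_(a <- A) (1 - 'X^a) : {poly R}).[0] = 1.
Proof.
move=> A_ge1; rewrite horner_prod_1subXn big1_seq // => -[|a] /andP[_ /(allP A_ge1)] //.
by rewrite expr0n subr0.
Qed.

Lemma coef_prod_1subXn_min (R : comNzRingType) (A : seq nat) k :
  all (leq k.+1) A ->
  (\prod_(a <- A) (1 - 'X^a) : {poly R})`_k.+1 = - (count_mem k.+1 A)%:R.
Proof.
move=> A_ge; suff [q ->] : exists q : {poly R}, \prod_(a <- A) (1 - 'X^a)
    = 1 - (count_mem k.+1 A)%:R * 'X^(k.+1) + 'X^(k.+2) * q.
  by rewrite coefD coefB coef1 mulr_natl coefMn coefXn coefXnM ltnSn eqxx /= sub0r addr0.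
elim: A A_ge => [_|a A IH /andP[k_lt_a /IH[q qE]]].
  by exists 0; rewrite big_nil mulr0 addr0 mul0r subr0.
rewrite big_cons qE /=; have [->|a_neq] := eqVneq a k.+1.
  exists (q + (count_mem k.+1 A)%:R * 'X^k - 'X^(k.+1) * q).
  by rewrite add1n -nat1r !exprS; ring.
have /subnKC <- : (k.+2 <= a)%N by rewrite ltn_neqAle eq_sym a_neq.
set d := (a - k.+2)%N; rewrite add0n.
exists (q - 'X^d + (count_mem k.+1 A)%:R * 'X^d * 'X^(k.+1) - 'X^d * 'X^(k.+2) * q).
by rewrite exprD; ring.
Qed.

Lemma perm_eq_prod_1subXn (R : idomainType) (A B : seq nat) :
  [pchar R] =i pred0 -> all (leq 1) A -> all (leq 1) B ->
  \prod_(a <- A) (1 - 'X^a) = \prod_(b <- B) (1 - 'X^b) :> {poly R} ->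
  perm_eq A B.
Proof.
move=> R0; have [n] := ubnP (size A); elim: n A B => // n IH A B szA A_ge1 B_ge1 AB.
have [/(congr1 size)/eqP|] := eqVneq (A ++ B) [::].
  by rewrite size_cat addn_eq0 !size_eq0 => /andP[/eqP-> /eqP->].
rewrite -size_eq0 -lt0n -has_predT => /hasP[x xAB _].
have [[|k] mAB m_min] := ex_minnP (ex_intro (fun m => m \in A ++ B) x xAB).
  by move: mAB; rewrite mem_cat => /orP[/(allP A_ge1) | /(allP B_ge1)].
have A_ge : all (leq k.+1) A by apply/allP => a aA; apply: m_min; rewrite mem_cat aA.
have B_ge : all (leq k.+1) B by apply/allP => b bB; apply: m_min; rewrite mem_cat bB orbT.
have count_eq : count_mem k.+1 A = count_mem k.+1 B.
  apply/eqP; rewrite -(pchar0_eqr_nat R0) -eqr_opp.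
  by rewrite -!coef_prod_1subXn_min // AB.
have [kA kB] : k.+1 \in A /\ k.+1 \in B.
  by move: mAB; rewrite mem_cat -!has_pred1 !has_count count_eq orbb.
have X_neq0 : 1 - 'X^(k.+1) != 0 :> {poly R}.
  apply/eqP => /(congr1 (horner^~ 0)).
  by rewrite !hornerE expr0n /= subr0; apply/eqP/oner_neq0.
have rem_AB : \prod_(a <- rem k.+1 A) (1 - 'X^a)
    = \prod_(b <- rem k.+1 B) (1 - 'X^b) :> {poly R}.
  apply: (mulfI X_neq0); move: AB.
  by rewrite (perm_big _ (perm_to_rem kA)) (perm_big _ (perm_to_rem kB)) !big_cons.
rewrite (permPl (perm_to_rem kA)) (permPr (perm_to_rem kB)) perm_cons.
apply: IH rem_AB.
- by move: szA; rewrite (perm_size (perm_to_rem kA)).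
- by apply/allP => a /mem_rem /(allP A_ge1).
- by apply/allP => b /mem_rem /(allP B_ge1).
Qed.

Lemma mxtrace_sympow_upper (K : fieldType) n (g : 'M[K]_2) : g 1 0 = 0 ->
  \tr (sympow n g) = \sum_(j < n.+1) g 0 0 ^+ (n - j) * g 1 1 ^+ j.
Proof.
move=> g10; apply: eq_bigr => j _; rewrite mxE big_ord_recl big1 => [|i _].
  by rewrite /= !subn0 bin0 binn subnn !expr0 mul1n !mulr1 addr0 mul1r.
by rewrite g10 expr0n /= mulr0 !mul0r.
Qed.

Lemma sum_expr_inv_mul (R : comNzRingType) (l u : R) n : l * u = 1 ->
  (1 - l ^+ 2) * l ^+ n * \sum_(j < n.+1) l ^+ (n - j) * u ^+ j
  = 1 - l ^+ (n.+1).*2.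
Proof.
move=> lu1.
have -> : (1 - l ^+ 2) * l ^+ n = - l ^+ n.+1 * (l - u) + (1 - l * u) * l ^+ n.
  by rewrite !exprS; ring.
rewrite lu1 subrr mul0r addr0 -mulrA -subrXX mulNr mulrBr -exprD addnn.
by rewrite -exprMn lu1 expr1n opprB.
Qed.

Section TraceOfSymmetricPowers.

Context {K : fieldType} {T : nat -> {poly int}}.
Hypothesis T_trace : forall n : nat, (0 < n)%N -> forall s : 'M[K]_2, \det s = 1 ->
  \tr (sympow n s) = (map_poly intr (T n)).[\tr s].

Lemma hornerT_add_inv n (l : K) : (0 < n)%N -> l != 0 ->
  (1 - l ^+ 2) * l ^+ n * (map_poly intr (T n)).[l + l^-1] = 1 - l ^+ (n.+1).*2.
Proof.
move=> n_gt0 l_neq0; pose s := diag_mx (\row_(i < 2) if i == 0 then l else l^-1).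
have det_s : \det s = 1 by rewrite det_diag !big_ord_recr big_ord0 !mxE /= mul1r mulfV.
have tr_s : \tr s = l + l^-1 by rewrite mxtrace_diag !big_ord_recr big_ord0 !mxE /= add0r.
rewrite -tr_s -T_trace // mxtrace_sympow_upper ?mxE //.
exact/sum_expr_inv_mul/mulfV.
Qed.

Lemma horner_prodT_add_inv (ns : seq nat) (l : K) :
  all (fun n => 0 < n)%N ns -> l != 0 ->
  \prod_(n <- ns) (1 - l ^+ (n.+1).*2)
  = (1 - l ^+ 2) ^+ size ns * l ^+ sumn ns
    * (\prod_(n <- ns) map_poly intr (T n)).[l + l^-1].
Proof.
move=> + l_neq0; rewrite horner_prod; elim: ns => [|n ns IH /andP[n_gt0 /IH IHns]].
  by rewrite !big_nil /= expr0 !mul1r.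
rewrite !big_cons IHns -(hornerT_add_inv _ _ n_gt0 l_neq0) /= exprD.
by rewrite [_ ^+ (size ns).+1]exprS; ring.
Qed.

End TraceOfSymmetricPowers.

Theorem lemma4p4 (K : fieldType) (charK0 : [pchar K] =i pred0)
  (T : nat -> {poly int})
  (T_deg : forall n : nat, (0 < n)%N -> size (T n) = n.+1)
  (T_trace : forall n : nat, (0 < n)%N -> forall s : 'M[K]_2, \det s = 1 ->
      \tr (sympow n s) = (map_poly intr (T n)).[\tr s])
  (ns ms : seq nat)
  (ns_pos : all (fun n => 0 < n)%N ns) (ms_pos : all (fun m => 0 < m)%N ms)
  (Sigma : set 'M[K]_2)
  (Sigma_SL2 : forall s, Sigma s -> \det s = 1)
  (Sigma_inf : infinite_set Sigma)
  (Sigma_tr : forall s1 s2, Sigma s1 -> Sigma s2 -> \tr s1 = \tr s2 -> s1 = s2)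
  (Heq : forall s, Sigma s ->
      \prod_(n <- ns) (map_poly intr (T n)).[\tr s]
      = \prod_(m <- ms) (map_poly intr (T m)).[\tr s]) :
  perm_eq ns ms.
Proof.
have P_eq : \prod_(n <- ns) map_poly intr (T n)
    = \prod_(m <- ms) map_poly intr (T m) :> {poly K}.
  apply: (@eq_poly_on_infinite _ _ _ (@mxtrace K 2) _ _ Sigma_inf Sigma_tr) => s Ss.
  by rewrite !horner_prod Heq.
pose A := [seq (n.+1).*2 | n <- ns] ++ nseq (size ms) 2%N.
pose B := [seq (m.+1).*2 | m <- ms] ++ nseq (size ns) 2%N.
have exps_ge1 s k : all (leq 1) ([seq (n.+1).*2 | n <- s] ++ nseq k 2%N).
  by rewrite all_cat all_nseq orbT andbT; apply/allP => _ /mapP[n _ ->].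
have XAB : 'X^(sumn ms) * \prod_(a <- A) (1 - 'X^a)
    = 'X^(sumn ns) * \prod_(b <- B) (1 - 'X^b) :> {poly K}.
  apply: (@eq_poly_on_infinite _ _ setT (fun i : nat => i.+1%:R) _ _ infinite_nat).
    by move=> i j _ _ /eqP; rewrite (pchar0_eqr_nat charK0) => /eqP [].
  move=> i _; have i_neq0 : i.+1%:R != 0 :> K by rewrite (pchar0_eqr_nat charK0 _ 0).
  rewrite !hornerM !hornerXn !horner_prod_1subXn !big_cat !big_nseq !iter_mulr_1 !big_map.
  by rewrite !(horner_prodT_add_inv T_trace) // P_eq /=; ring.
have AB : perm_eq A B.
  apply: perm_eq_prod_1subXn charK0 (exps_ge1 _ _) (exps_ge1 _ _) _.
  by apply: mulXnI XAB; rewrite horner0_prod_1subXn ?oner_neq0 ?exps_ge1.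
have count2 s : all (fun n => 0 < n)%N s -> count_mem 2%N [seq (n.+1).*2 | n <- s] = 0%N.
  by elim: s => //= n s IH /andP[n_gt0 /IH ->]; case: n n_gt0.
have size_eq : size ms = size ns.
  move/permP: AB => /(_ (pred1 2%N)).
  by rewrite !count_cat !count_nseq !count2 //= !mul1n.
by move: AB; rewrite /A /B size_eq perm_cat2r; apply: perm_map_inj => m n /double_inj [].
Qed.
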